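(* Let $\mathbf u\in\{0,1\}^{\mathbb N}$ with $\mathbf u\ne0^k\overline1$ and $\mathbf u\ne1^k\overline0$ for all $k\ge0$. Then there is a suffix $\mathbf v$ of $\mathbf u$ such that $\inf(\mathbf v)=\inf_1(\mathbf v)=\inf_1(\mathbf u)$ and $\sup(\mathbf v)=\sup_0(\mathbf v)=\sup_0(\mathbf u)$.
   Context: Infinite words over $\{0,1\}$ are ordered lexicographically; $\overline{a}$ denotes infinite repetition of $a$ and $0^k$ is the word of $k$ zeros. For $\mathbf u=u_1u_2\cdots\in\{0,1\}^{\mathbb N}$, $\sup(\mathbf u)$ and $\inf(\mathbf u)$ are the lexicographic supremum and infimum of $\{u_ku_{k+1}\cdots:k\ge1\}$, $\inf_1(\mathbf u)=\inf\{u_{k+1}u_{k+2}\cdots:k\ge1,\ u_k=1\}$ and $\sup_0(\mathbf u)=\sup\{u_{k+1}u_{k+2}\cdots:k\ge1,\ u_k=0\}$. A suffix of $\mathbf u$ is a word $u_ku_{k+1}\cdots$ with $k\ge1$. *)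

(* Infinite binary words over {0,1} encoded as nat -> bool,
   with false = 0 and true = 1; positions are 0-indexed (u_1 is u 0). *)
From Stdlib Require Import Arith.

Definition word := nat -> bool.

Definition weq (u v : word) : Prop := forall i, u i = v i.

Definition lex_lt (u v : word) : Prop :=
  exists n, (forall i, i < n -> u i = v i) /\ u n = false /\ v n = true.

Definition lex_le (u v : word) : Prop := weq u v \/ lex_lt u v.

Definition is_sup (S : word -> Prop) (s : word) : Prop :=
  (forall x, S x -> lex_le x s) /\
  (forall b, (forall x, S x -> lex_le x b) -> lex_le s b).

Definition is_inf (S : word -> Prop) (m : word) : Prop :=
  (forall x, S x -> lex_le m x) /\
  (forall b, (forall x, S x -> lex_le b x) -> lex_le b m).

(* the suffix u_{j+1} u_{j+2} ... (0-indexed: drop the first j letters) *)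
Definition shift (j : nat) (u : word) : word := fun i => u (i + j).

Definition suffixes (u : word) : word -> Prop :=
  fun x => exists j, weq x (shift j u).

(* {u_{k+1} u_{k+2} ... : k >= 1, u_k = 1}  (used for inf_1) *)
Definition after1 (u : word) : word -> Prop :=
  fun x => exists j, u j = true /\ weq x (shift (S j) u).

(* {u_{k+1} u_{k+2} ... : k >= 1, u_k = 0}  (used for sup_0) *)
Definition after0 (u : word) : word -> Prop :=
  fun x => exists j, u j = false /\ weq x (shift (S j) u).

Definition zeros_then_ones (k : nat) : word := fun i => if i <? k then false else true.
Definition ones_then_zeros (k : nat) : word := fun i => if i <? k then true else false.

(** By complementing letters (which swaps [inf]/[sup] and [inf_1]/[sup_0]) we may
    assume that [u] starts with [1]; let [q] be the position of its first [0] and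
    [w := u_q u_{q+1} ...] (which starts with [0]).  Every zero of [u] lies in [w], so
    [sup_0(u) = sup_0(w)] dominates all suffixes of [w] and of [1w].  The suffixes of
    [u] following a [1] are [w], words starting with [1], and those of [w]; hence
    [inf_1(u) = min(w, a)] with [a := inf_1(w)].  If [a <= w] the suffix [v := w] works,
    and if [w < a] the suffix [v := 1w] works, with [inf(v) = inf_1(v) = w]. *)

From Stdlib Require Import Arith Lia Wf_nat Classical FunctionalExtensionality
  ClassicalDescription.

Definition wcompl (x : word) : word := fun i => negb (x i).

Definition wcons (b : bool) (x : word) : word :=
  fun i => match i with 0 => b | S i => x i end.

Lemma weq_eq x y : weq x y <-> x = y.
Proof.
  split; intro H.
  - apply functional_extensionality; exact H.
  - subst; intro; reflexivity.
Qed.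

Lemma wcomplK x : wcompl (wcompl x) = x.
Proof. apply functional_extensionality; intro i; unfold wcompl; destruct (x i); reflexivity. Qed.

Lemma wcompl_zeros_then_ones k : wcompl (zeros_then_ones k) = ones_then_zeros k.
Proof.
  apply functional_extensionality; intro i.
  unfold wcompl, zeros_then_ones, ones_then_zeros; destruct (i <? k); reflexivity.
Qed.

Lemma wcompl_ones_then_zeros k : wcompl (ones_then_zeros k) = zeros_then_ones k.
Proof. rewrite <- wcompl_zeros_then_ones; apply wcomplK. Qed.

Lemma shift_wcons k u : shift k u = wcons (u k) (shift (S k) u).
Proof. apply functional_extensionality; intros [|i]; unfold shift; simpl; f_equal; lia. Qed.

Lemma shift_wcompl j u : shift j (wcompl u) = wcompl (shift j u).
Proof. reflexivity. Qed.

Lemma shift1_wcons c x : shift 1 (wcons c x) = x.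
Proof. apply functional_extensionality; intro i; unfold shift; rewrite Nat.add_1_r; reflexivity. Qed.

Lemma shift_shift i j u : shift i (shift j u) = shift (i + j) u.
Proof. apply functional_extensionality; intro k; unfold shift; f_equal; lia. Qed.

Lemma shift0 u : shift 0 u = u.
Proof. apply functional_extensionality; intro k; unfold shift; f_equal; lia. Qed.

Lemma shift_eq k k' u : k = k' -> shift k u = shift k' u.
Proof. intros ->; reflexivity. Qed.

Lemma least_witness (P : nat -> Prop) :
  (exists n, P n) -> exists n, P n /\ forall i, i < n -> ~ P i.
Proof.
  intro Hex.
  destruct (dec_inh_nat_subset_has_unique_least_element P (fun n => classic (P n)) Hex)
    as [n [[Pn Hmin] _]].
  exists n; split; [exact Pn|]. intros i Hi Pi; specialize (Hmin i Pi); lia.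
Qed.

Lemma rise_between u j k :
  j < k -> u j = false -> u k = true ->
  exists p, j <= p < k /\ u p = false /\ u (S p) = true.
Proof.
  induction k as [|k IH]; intros Hjk Hj Hk; [lia|].
  destruct (u k) eqn:Huk.
  - destruct (Nat.eq_dec j k) as [->|Hne]; [congruence|].
    destruct (IH ltac:(lia) Hj eq_refl) as [p [Hp Hrise]]. exists p; split; [lia|exact Hrise].
  - exists k; repeat split; auto; lia.
Qed.

(** * The lexicographic order *)

Lemma lex_le_refl x : lex_le x x.
Proof. left; intro; reflexivity. Qed.

Lemma lex_lt_irrefl x : ~ lex_lt x x.
Proof. intros [n [_ [H1 H2]]]; congruence. Qed.

Lemma lex_lt_trans x y z : lex_lt x y -> lex_lt y z -> lex_lt x z.
Proof.
  intros [n [Hn [Hx Hy]]] [m [Hm [Hy' Hz]]].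
  destruct (lt_eq_lt_dec n m) as [[H|H]|H].
  - exists n; repeat split; auto.
    + intros i Hi; rewrite Hn by lia; apply Hm; lia.
    + rewrite <- Hm by lia; auto.
  - subst; congruence.
  - exists m; repeat split; auto.
    + intros i Hi; rewrite Hn by lia; apply Hm; lia.
    + rewrite Hn by lia; auto.
Qed.

Lemma lex_lt_le_trans x y z : lex_lt x y -> lex_le y z -> lex_lt x z.
Proof. intros H [H'|H']; [apply weq_eq in H'; subst; auto | eapply lex_lt_trans; eauto]. Qed.

Lemma lex_le_trans x y z : lex_le x y -> lex_le y z -> lex_le x z.
Proof. intros [H|H] H'; [apply weq_eq in H; subst; auto | right; eapply lex_lt_le_trans; eauto]. Qed.

Lemma lex_lt_not_le x y : lex_lt x y -> ~ lex_le y x.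
Proof. intros H H'; apply (lex_lt_irrefl x); eapply lex_lt_le_trans; eauto. Qed.

Lemma lex_total x y : lex_le x y \/ lex_lt y x.
Proof.
  destruct (classic (exists n, x n <> y n)) as [Hdiff|Hsame].
  - destruct (least_witness _ Hdiff) as [d [Hd Hmin]].
    assert (Hagree : forall i, i < d -> x i = y i) by (intros i Hi; apply NNPP, Hmin, Hi).
    destruct (x d) eqn:Ex, (y d) eqn:Ey; try congruence.
    + right; exists d; repeat split; auto. intros i Hi; symmetry; auto.
    + left; right; exists d; repeat split; auto.
  - left; left; intro i. apply NNPP; intro Hne; eauto.
Qed.

Lemma lex_lt_head x y : x 0 = false -> y 0 = true -> lex_lt x y.
Proof. intros; exists 0; repeat split; auto; intros; lia. Qed.

Lemma lex_le_wcons c x y : lex_le x y -> lex_le (wcons c x) (wcons c y).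
Proof.
  intros [H|[n [Hn [H1 H2]]]].
  - apply weq_eq in H; subst; apply lex_le_refl.
  - right; exists (S n); repeat split; auto. intros [|i] Hi; simpl; auto; apply Hn; lia.
Qed.

Lemma wcons_false_le x : lex_le (wcons false x) x.
Proof.
  destruct (lex_total (wcons false x) x) as [H|[n [Hn [_ Htrue]]]]; [exact H|].
  (* Agreement of [x] with [0x] below [n] forces [0x] to be [0] up to [n]. *)
  assert (Hzero : forall i, i <= n -> wcons false x i = false).
  { induction i as [|i IH]; intro Hi; [reflexivity|].
    simpl; rewrite Hn by lia; apply IH; lia. }
  rewrite Hzero in Htrue by lia; discriminate.
Qed.

Lemma lex_lt_wcompl x y : lex_lt x y -> lex_lt (wcompl y) (wcompl x).
Proof.
  intros [n [Hn [H1 H2]]]; exists n; unfold wcompl; repeat split.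
  - intros i Hi; rewrite Hn; auto.
  - rewrite H2; auto.
  - rewrite H1; auto.
Qed.

Lemma lex_le_wcompl x y : lex_le x y -> lex_le (wcompl y) (wcompl x).
Proof.
  intros [H|H]; [apply weq_eq in H; subst; apply lex_le_refl | right; apply lex_lt_wcompl, H].
Qed.

Lemma le_wcons_true x : lex_le x (wcons true x).
Proof.
  replace (wcons true x) with (wcompl (wcons false (wcompl x))).
  - rewrite <- (wcomplK x) at 1. apply lex_le_wcompl, wcons_false_le.
  - apply functional_extensionality; intros [|i]; unfold wcompl; simpl;
      [|destruct (x i)]; reflexivity.
Qed.

(** * Infima and suprema *)

Section Infimum.
Variable A : word -> Prop.

(* The infimum is built letter by letter: its [n]-th letter is [0] exactly when some
   element of [A] extends the already built prefix of length [n] by a [0]. *)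
Definition inf_letter (n : nat) (pre : word) : bool :=
  if excluded_middle_informative
       (exists x, A x /\ (forall i, i < n -> x i = pre i) /\ x n = false)
  then false else true.

Fixpoint inf_approx (n : nat) : word :=
  match n with
  | 0 => fun _ => false
  | S n => fun i => if i <? n then inf_approx n i else inf_letter n (inf_approx n)
  end.

Definition inf_word : word := fun n => inf_approx (S n) n.

Lemma inf_word_letter n : inf_word n = inf_letter n (inf_approx n).
Proof. unfold inf_word; simpl; rewrite Nat.ltb_irrefl; reflexivity. Qed.

Lemma inf_approx_agree n i : i < n -> inf_approx n i = inf_word i.
Proof.
  induction n as [|n IH]; intro Hi; [lia|]. simpl.
  destruct (Nat.ltb_spec i n); [apply IH; lia|].
  replace i with n by lia; symmetry; apply inf_word_letter.
Qed.

Lemma inf_word_false n :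
  inf_word n = false <->
  exists x, A x /\ (forall i, i < n -> x i = inf_word i) /\ x n = false.
Proof.
  rewrite inf_word_letter; unfold inf_letter.
  destruct excluded_middle_informative as [[x [Sx [Hx Hn]]]|Hno].
  - split; [intros _|reflexivity].
    exists x; repeat split; auto. intros i Hi; rewrite Hx, inf_approx_agree; auto.
  - split; [discriminate|]. intros [x [Sx [Hx Hn]]]; exfalso; apply Hno.
    exists x; repeat split; auto. intros i Hi; rewrite Hx, inf_approx_agree; auto.
Qed.

Lemma inf_word_prefix_attained :
  (exists x, A x) -> forall n, exists x, A x /\ forall i, i < n -> x i = inf_word i.
Proof.
  intros [x0 Sx0] n; induction n as [|n [x [Sx Hx]]].
  - exists x0; split; auto; intros; lia.
  - destruct (inf_word n) eqn:Hn.
    + exists x; split; auto. intros i Hi.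
      destruct (Nat.eq_dec i n) as [->|]; [|apply Hx; lia].
      rewrite Hn. destruct (x n) eqn:Hxn; auto.
      assert (Hfalse : inf_word n = false) by (apply inf_word_false; eauto).
      congruence.
    + apply inf_word_false in Hn. destruct Hn as [y [Sy [Hy Hyn]]].
      exists y; split; auto. intros i Hi.
      destruct (Nat.eq_dec i n) as [->|]; [|apply Hy; lia].
      rewrite Hyn; symmetry; apply inf_word_false; eauto.
Qed.

Lemma inf_word_is_inf : (exists x, A x) -> is_inf A inf_word.
Proof.
  intro Hne; split.
  - intros x Ax. destruct (lex_total inf_word x) as [H|[d [Hd [Hx Hm]]]]; auto.
    assert (Hfalse : inf_word d = false).
    { apply inf_word_false. exists x; repeat split; auto. }
    congruence.
  - intros b Hb. destruct (lex_total b inf_word) as [H|[d [Hd [Hm Hb']]]]; auto.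
    destruct (inf_word_prefix_attained Hne (S d)) as [x [Ax Hx]].
    exfalso; apply (lex_lt_not_le x b); [|apply Hb, Ax].
    exists d; repeat split.
    + intros i Hi; rewrite Hx by lia; apply Hd, Hi.
    + rewrite Hx by lia; exact Hm.
    + exact Hb'.
Qed.
End Infimum.

Lemma inf_exists S : (exists x, S x) -> exists m, is_inf S m.
Proof. intro H; exists (inf_word S); apply inf_word_is_inf, H. Qed.

Lemma is_sup_wcompl S m : is_inf (fun x => S (wcompl x)) m -> is_sup S (wcompl m).
Proof.
  intros [H1 H2]; split.
  - intros x Sx. rewrite <- (wcomplK x) at 1. apply lex_le_wcompl, H1. rewrite wcomplK; auto.
  - intros b Hb. rewrite <- (wcomplK b). apply lex_le_wcompl, H2. intros x Sx.
    rewrite <- (wcomplK x). apply lex_le_wcompl, Hb, Sx.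
Qed.

Lemma is_inf_wcompl S m : is_sup (fun x => S (wcompl x)) m -> is_inf S (wcompl m).
Proof.
  intros [H1 H2]; split.
  - intros x Sx. rewrite <- (wcomplK x). apply lex_le_wcompl, H1. rewrite wcomplK; auto.
  - intros b Hb. rewrite <- (wcomplK b). apply lex_le_wcompl, H2. intros x Sx.
    rewrite <- (wcomplK x). apply lex_le_wcompl, Hb, Sx.
Qed.

Lemma sup_exists S : (exists x, S x) -> exists M, is_sup S M.
Proof.
  intros [x Sx]. destruct (inf_exists (fun y => S (wcompl y))) as [m Hm].
  - exists (wcompl x); rewrite wcomplK; exact Sx.
  - exists (wcompl m); apply is_sup_wcompl, Hm.
Qed.

Lemma is_inf_ext S T m : (forall x, S x <-> T x) -> is_inf S m -> is_inf T m.
Proof.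
  intros E [H1 H2]; split; [intros x Tx; apply H1, E, Tx|].
  intros b Hb; apply H2; intros x Sx; apply Hb, E, Sx.
Qed.

Lemma is_sup_ext S T M : (forall x, S x <-> T x) -> is_sup S M -> is_sup T M.
Proof.
  intros E [H1 H2]; split; [intros x Tx; apply H1, E, Tx|].
  intros b Hb; apply H2; intros x Sx; apply Hb, E, Sx.
Qed.

Lemma is_inf_transfer S T m :
  is_inf S m -> (forall x, T x -> lex_le m x) ->
  (forall y, S y -> exists x, T x /\ lex_le x y) -> is_inf T m.
Proof.
  intros [H1 H2] HT HS; split; auto. intros b Hb; apply H2; intros y Sy.
  destruct (HS y Sy) as [x [Tx Hx]]; eapply lex_le_trans; eauto.
Qed.

Lemma is_sup_transfer S T M :
  is_sup S M -> (forall x, T x -> lex_le x M) ->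
  (forall y, S y -> exists x, T x /\ lex_le y x) -> is_sup T M.
Proof.
  intros [H1 H2] HT HS; split; auto. intros b Hb; apply H2; intros y Sy.
  destruct (HS y Sy) as [x [Tx Hx]]; eapply lex_le_trans; eauto.
Qed.

Lemma is_inf_min T m : T m -> (forall x, T x -> lex_le m x) -> is_inf T m.
Proof. intros Tm H; split; auto. Qed.

(** * Sets of suffixes *)

Lemma suffixes_iff w x : suffixes w x <-> exists j, x = shift j w.
Proof. split; intros [j H]; exists j; apply weq_eq; auto. Qed.

Lemma after1_iff w x : after1 w x <-> exists j, w j = true /\ x = shift (S j) w.
Proof. split; intros [j [H1 H2]]; exists j; split; auto; apply weq_eq; auto. Qed.

Lemma after0_iff w x : after0 w x <-> exists j, w j = false /\ x = shift (S j) w.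
Proof. split; intros [j [H1 H2]]; exists j; split; auto; apply weq_eq; auto. Qed.

Lemma after1_suffixes w x : after1 w x -> suffixes w x.
Proof. intros [j [_ H]]; exists (S j); exact H. Qed.

Lemma after0_suffixes w x : after0 w x -> suffixes w x.
Proof. intros [j [_ H]]; exists (S j); exact H. Qed.

Lemma after1_shift w j x : after1 (shift j w) x -> after1 w x.
Proof.
  rewrite !after1_iff; intros [i [Hi ->]].
  exists (i + j); split; auto. rewrite shift_shift; apply shift_eq; lia.
Qed.

Lemma after0_shift_iff w j :
  (forall i, i < j -> w i = true) -> forall x, after0 (shift j w) x <-> after0 w x.
Proof.
  intros Hones x; rewrite !after0_iff; split; intros [i [Hi ->]].
  - exists (i + j); split; auto. rewrite shift_shift; apply shift_eq; lia.
  - assert (j <= i) by (destruct (le_lt_dec j i); [lia|rewrite Hones in Hi; [discriminate|lia]]).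
    exists (i - j); split.
    + unfold shift; replace (i - j + j) with i by lia; exact Hi.
    + rewrite shift_shift; apply shift_eq; lia.
Qed.

(* A suffix following a [0] is smaller than the preceding one, so only the suffixes
   following a [1] matter for lower bounds (dually for upper bounds). *)
Lemma suffixes_ge w c :
  (forall x, after1 w x -> lex_le c x) -> lex_le c w -> forall x, suffixes w x -> lex_le c x.
Proof.
  intros H1 H0 x Hx; apply suffixes_iff in Hx; destruct Hx as [k ->].
  induction k as [|k IH]; [rewrite shift0; exact H0|].
  destruct (w k) eqn:Hk; [apply H1, after1_iff; eauto|].
  eapply lex_le_trans; [exact IH|]. rewrite shift_wcons, Hk. apply wcons_false_le.
Qed.

Lemma suffixes_le w c :
  (forall x, after0 w x -> lex_le x c) -> lex_le w c -> forall x, suffixes w x -> lex_le x c.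
Proof.
  intros H1 H0 x Hx; apply suffixes_iff in Hx; destruct Hx as [k ->].
  induction k as [|k IH]; [rewrite shift0; exact H0|].
  destruct (w k) eqn:Hk; [|apply H1, after0_iff; eauto].
  eapply lex_le_trans; [|exact IH]. rewrite (shift_wcons k), Hk. apply le_wcons_true.
Qed.

Lemma is_inf_suffixes w m : is_inf (after1 w) m -> lex_le m w -> is_inf (suffixes w) m.
Proof.
  intros Hm Hw. apply (is_inf_transfer _ _ _ Hm).
  - apply suffixes_ge; [apply Hm|exact Hw].
  - intros y Hy; exists y; split; [apply after1_suffixes, Hy|apply lex_le_refl].
Qed.

Lemma is_sup_suffixes w M : is_sup (after0 w) M -> lex_le w M -> is_sup (suffixes w) M.
Proof.
  intros HM Hw. apply (is_sup_transfer _ _ _ HM).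
  - apply suffixes_le; [apply HM|exact Hw].
  - intros y Hy; exists y; split; [apply after0_suffixes, Hy|apply lex_le_refl].
Qed.

Lemma suffixes_wcompl w x : suffixes (wcompl w) x <-> suffixes w (wcompl x).
Proof.
  rewrite !suffixes_iff; split; intros [j Hj]; exists j.
  - rewrite Hj, shift_wcompl, wcomplK; reflexivity.
  - rewrite <- (wcomplK x), Hj; reflexivity.
Qed.

Lemma after1_wcompl w x : after1 (wcompl w) x <-> after0 w (wcompl x).
Proof.
  rewrite after1_iff, after0_iff; unfold wcompl at 1;
    split; intros [j [Hj Hx]]; exists j; split.
  - destruct (w j); [discriminate|reflexivity].
  - rewrite Hx, shift_wcompl, wcomplK; reflexivity.
  - rewrite Hj; reflexivity.
  - rewrite <- (wcomplK x), Hx; reflexivity.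
Qed.

Lemma after0_wcompl w x : after0 (wcompl w) x <-> after1 w (wcompl x).
Proof.
  rewrite after0_iff, after1_iff; unfold wcompl at 1;
    split; intros [j [Hj Hx]]; exists j; split.
  - destruct (w j); [reflexivity|discriminate].
  - rewrite Hx, shift_wcompl, wcomplK; reflexivity.
  - rewrite Hj; reflexivity.
  - rewrite <- (wcomplK x), Hx; reflexivity.
Qed.

(** * The suffix realising both extrema *)

Definition extremal_suffix (u : word) (j : nat) : Prop :=
  let v := shift j u in
  (exists m, is_inf (suffixes v) m /\ is_inf (after1 v) m /\ is_inf (after1 u) m) /\
  (exists M, is_sup (suffixes v) M /\ is_sup (after0 v) M /\ is_sup (after0 u) M).

Lemma extremal_suffix_wcompl u j : extremal_suffix (wcompl u) j -> extremal_suffix u j.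
Proof.
  unfold extremal_suffix; cbv zeta; rewrite shift_wcompl.
  intros [[m [H1 [H2 H3]]] [M [H4 [H5 H6]]]]; split.
  - exists (wcompl M); split; [|split]; apply is_inf_wcompl.
    + exact (is_sup_ext _ _ _ (suffixes_wcompl _) H4).
    + exact (is_sup_ext _ _ _ (after0_wcompl _) H5).
    + exact (is_sup_ext _ _ _ (after0_wcompl _) H6).
  - exists (wcompl m); split; [|split]; apply is_sup_wcompl.
    + exact (is_inf_ext _ _ _ (suffixes_wcompl _) H1).
    + exact (is_inf_ext _ _ _ (after1_wcompl _) H2).
    + exact (is_inf_ext _ _ _ (after1_wcompl _) H3).
Qed.

Section FirstZero.
Variable u : word.
Variables q p : nat.
Hypothesis q_pos : 0 < q.
Hypothesis ones_before_q : forall i, i < q -> u i = true.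
Hypothesis u_q : u q = false.
Hypothesis q_le_p : q <= p.
Hypothesis u_p : u p = false.
Hypothesis u_Sp : u (S p) = true.

Lemma after1_first_zero x :
  after1 u x -> lex_le (shift q u) x \/ after1 (shift q u) x.
Proof.
  rewrite after1_iff; intros [i [Hi ->]].
  destruct (le_lt_dec q i).
  - right; apply after1_iff; exists (i - q); split.
    + unfold shift; replace (i - q + q) with i by lia; exact Hi.
    + rewrite shift_shift; apply shift_eq; lia.
  - left. destruct (Nat.eq_dec (S i) q) as [<-|]; [apply lex_le_refl|].
    right; apply lex_lt_head; [exact u_q|apply ones_before_q; lia].
Qed.

Lemma sup_at_most_first_zero j :
  j <= q -> (exists x, after0 u x /\ lex_le (shift j u) x) ->
  exists M, is_sup (suffixes (shift j u)) M /\ is_sup (after0 (shift j u)) M /\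
            is_sup (after0 u) M.
Proof.
  intros Hj [x [Hx Hle]].
  destruct (sup_exists (after0 u)) as [M HM]; [eauto|].
  assert (HMj : is_sup (after0 (shift j u)) M).
  { eapply is_sup_ext; [|exact HM]. intro y; symmetry.
    apply after0_shift_iff; intros i Hi; apply ones_before_q; lia. }
  exists M; split; [|split; [exact HMj|exact HM]].
  apply is_sup_suffixes; [exact HMj|]. eapply lex_le_trans; [exact Hle|apply HM, Hx].
Qed.

Lemma extremal_suffix_first_zero a :
  is_inf (after1 (shift q u)) a -> lex_le a (shift q u) -> extremal_suffix u q.
Proof.
  intros Ha Haw; split.
  - exists a; split; [|split]; [apply is_inf_suffixes; assumption|assumption|].
    apply (is_inf_transfer _ _ _ Ha).
    + intros x Hx; destruct (after1_first_zero x Hx) as [H|H];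
        [eapply lex_le_trans; eauto|apply Ha, H].
    + intros y Hy; exists y; split; [apply (after1_shift _ _ _ Hy)|apply lex_le_refl].
  - apply sup_at_most_first_zero; [lia|]. exists (shift (S q) u); split.
    + apply after0_iff; eauto.
    + rewrite (shift_wcons q), u_q. apply wcons_false_le.
Qed.

Lemma extremal_suffix_before_first_zero a :
  is_inf (after1 (shift q u)) a -> lex_lt (shift q u) a -> extremal_suffix u (pred q).
Proof.
  intros Ha Hlt.
  assert (Hv : shift (pred q) u = wcons true (shift q u)).
  { rewrite shift_wcons, ones_before_q by lia. f_equal; apply shift_eq; lia. }
  assert (Hlow : forall x, after1 u x -> lex_le (shift q u) x).
  { intros x Hx; destruct (after1_first_zero x Hx) as [H|H]; [exact H|].
    right; eapply lex_lt_le_trans; [exact Hlt|apply Ha, H]. }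
  assert (Hinf_v : is_inf (after1 (shift (pred q) u)) (shift q u)).
  { apply is_inf_min; [|intros x Hx; apply Hlow, (after1_shift _ _ _ Hx)].
    apply after1_iff; exists 0; rewrite Hv, shift1_wcons; split; reflexivity. }
  split.
  - exists (shift q u); split; [|split]; [|exact Hinf_v|].
    + apply is_inf_suffixes; [exact Hinf_v|]. rewrite Hv; apply le_wcons_true.
    + apply is_inf_min; [|exact Hlow]. apply after1_iff; exists (pred q).
      split; [apply ones_before_q; lia|apply shift_eq; lia].
  - apply sup_at_most_first_zero; [lia|]. exists (shift (S p) u); split.
    + apply after0_iff; eauto.
    + rewrite Hv, (shift_wcons (S p)), u_Sp. apply lex_le_wcons, Hlow, after1_iff; eauto.
Qed.

Lemma extremal_suffix_exists : exists j, extremal_suffix u j.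
Proof.
  destruct (inf_exists (after1 (shift q u))) as [a Ha].
  { exists (shift (S (S p - q)) (shift q u)); apply after1_iff; exists (S p - q); split; auto.
    unfold shift; replace (S p - q + q) with (S p) by lia; exact u_Sp. }
  destruct (lex_total a (shift q u)) as [H|H].
  - exists q; apply (extremal_suffix_first_zero a); assumption.
  - exists (pred q); apply (extremal_suffix_before_first_zero a); assumption.
Qed.
End FirstZero.

Lemma extremal_suffix_head_one u :
  u 0 = true -> ~ weq u (zeros_then_ones 0) -> (forall k, ~ weq u (ones_then_zeros k)) ->
  exists j, extremal_suffix u j.
Proof.
  intros Hu0 Hnot_ones Hnot_ones_zeros.
  assert (Hzero : exists n, u n = false).
  { apply NNPP; intro C; apply Hnot_ones; intro i.
    destruct (u i) eqn:E; [reflexivity|exfalso; eauto]. }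
  destruct (least_witness _ Hzero) as [q [Hq Hmin]].
  assert (Hones : forall i, i < q -> u i = true).
  { intros i Hi; destruct (u i) eqn:E; [reflexivity|exfalso; eapply Hmin; eauto]. }
  assert (Hq_pos : 0 < q) by (destruct q; [congruence|lia]).
  assert (Hone : exists k, q < k /\ u k = true).
  { apply NNPP; intro C; apply (Hnot_ones_zeros q); intro i. unfold ones_then_zeros.
    destruct (Nat.ltb_spec i q); [apply Hones; auto|].
    destruct (Nat.eq_dec i q) as [->|]; [exact Hq|].
    destruct (u i) eqn:E; [exfalso; apply C; exists i; split; [lia|exact E]|reflexivity]. }
  destruct Hone as [k [Hqk Hk]].
  destruct (rise_between u q k Hqk Hq Hk) as [p [Hp [Hup HuSp]]].
  apply (extremal_suffix_exists u q p); auto; lia.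
Qed.

Theorem lemma2p5 (u : word)
  (h0 : forall k : nat, ~ weq u (zeros_then_ones k))
  (h1 : forall k : nat, ~ weq u (ones_then_zeros k)) :
  exists j : nat,
    let v := shift j u in
    (exists m : word,
        is_inf (suffixes v) m /\ is_inf (after1 v) m /\ is_inf (after1 u) m) /\
    (exists M : word,
        is_sup (suffixes v) M /\ is_sup (after0 v) M /\ is_sup (after0 u) M).
Proof.
  destruct (u 0) eqn:Hu0; [exact (extremal_suffix_head_one u Hu0 (h0 0) h1)|].
  destruct (extremal_suffix_head_one (wcompl u)) as [j Hj].
  - unfold wcompl; rewrite Hu0; reflexivity.
  - intro C; apply (h1 0), weq_eq. apply weq_eq in C.
    rewrite <- (wcomplK u), C; apply wcompl_zeros_then_ones.
  - intros k C; apply (h0 k), weq_eq. apply weq_eq in C.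
    rewrite <- (wcomplK u), C; apply wcompl_ones_then_zeros.
  - exists j; exact (extremal_suffix_wcompl u j Hj).
Qed.
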